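(* Assume BMIP has a finite optimal solution. Let $Q=2^J$ and let $\mathbf t^{k,1},\dots,\mathbf t^{k,Q}$ enumerate all vectors in $\{0,1\}^J$. Then BMIP1 is equivalent (same optimal value and same optimal values of the variables $(\mathbf p,\mathbf p^s,\mathbf z,\mathbf x',\mathbf q',\mathbf y',\mathbf t')$) to the single-level problem $$\textbf{BMIPe}:\ \max\ \mathcal P(\mathbf p,\mathbf p^s,\mathbf z,\mathbf y',\mathbf t')$$ over $(\mathbf p,\mathbf p^s,\mathbf z,\mathbf x',\mathbf q',\mathbf y',\mathbf t')$ and dual variables $\mu_1^{k,l},\mu_2^{k,l},\nu_j^{k,l},\Gamma_j^{k,l},\sigma_j^{k,l},\xi_i^{k,l},\tau_{i,j}^{k,l}\ge0$, $\eta_i^{k,l}\in\mathbb R$ ($k\in\mathcal K$, $1\le l\le Q$), subject to $(\mathbf p,\mathbf p^s,\mathbf z,\mathbf x',\mathbf q',\mathbf y',\mathbf t')\in\mathcal H$, $(\mathbf x'^k,\mathbf q'^k,\mathbf y'^k,\mathbf t'^k)\in\mathcal S^k(\mathbf p,\mathbf p^s,\mathbf z)$ for all $k$, and, for all $k$ and all $1\le l\le Q$: $$p_0(1+\mu_1^{k,l})-\mu_2^{k,l}\ge0;\quad p_j\mu_1^{k,l}-\Gamma_j^{k,l}+\sigma_j^{k,l}+p_j\ge0\ \forall j;$$ $$\mu_2^{k,l}+d_{i,0}\xi_i^{k,l}-\eta_i^{k,l}\ge-w^kd_{i,0}\ \forall i;\quad \eta_i^{k,l}\le\psi_i^k\ \forall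 i;\quad \Gamma_j^{k,l}+d_{i,j}\xi_i^{k,l}+\tau_{i,j}^{k,l}-\eta_i^{k,l}\ge-w^kd_{i,j}\ \forall i,j;$$ $$\mathcal C^k(\mathbf x'^k,\mathbf q'^k,\mathbf y'^k,\mathbf t'^k\mid\mathbf p,\mathbf p^s,\mathbf z)\le\sum_j(\phi_j^k+s^kp_j^s)t_j^{k,l}-\mu_1^{k,l}\Big(B^k-\sum_j(\phi_j^k+s^kp_j^s)t_j^{k,l}\Big)+\sum_j\nu_j^{k,l}(t_j^{k,l}-z_j)$$ $$\qquad+\sum_iR_i^k\eta_i^{k,l}-\sum_iR_i^kD^{k,m}\xi_i^{k,l}-\sum_jC_jt_j^{k,l}\sigma_j^{k,l}-\sum_{i,j}a_{i,j}^k\tau_{i,j}^{k,l}R_i^k.$$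
   Context: Model. Finite sets $\mathcal I$ (areas), $\mathcal J$ (edge nodes, $|\mathcal J|=J$), $\mathcal K$ (services). Nonnegative parameters $C_j>0$, $S_j$, $d_{i,j}$, $d_{i,0}$, $D^{k,m}$, $B^k$, $s^k$, $w^k$, $\psi_i^k$, $R_i^k$, $\phi_j^k$, $c_j$, $f_j$, $p_0$; $a_{i,j}^k\in\{0,1\}$; finite price menus $p_j^1,\dots,p_j^V$, $p_j^{s1},\dots,p_j^{sH}$. Follower-$k$ variables: $x_{i,0}^k,x_{i,j}^k,y_0^k,y_j^k,q_i^k\ge0$, $t_j^k\in\{0,1\}$. $\mathcal S^k(\mathbf p,\mathbf p^s,\mathbf z)$ is defined by: $p_0y_0^k+\sum_j p_jy_j^k+\sum_j(\phi_j^k+s^kp_j^s)t_j^k\le B^k$; $t_j^k\le z_j$; $y_j^k\le C_jt_j^k$; $y_0^k\ge\sum_i x_{i,0}^k$; $y_j^k\ge\sum_i x_{i,j}^k$; $x_{i,0}^k+\sum_j x_{i,j}^k+q_i^k=R_i^k$; $x_{i,0}^kd_{i,0}+\sum_jx_{i,j}^kd_{i,j}\le D^{k,m}R_i^k$; $x_{i,j}^k\le a_{i,j}^kR_i^k$. Follower cost $\mathcal C^k=p_0y_0^k+\sum_jp_jy_j^k+\sum_i\psi_i^kq_i^k+\sum_j(\phi_j^k+s^kp_j^s)t_j^k+w^k(\sum_ix_{i,0}^kd_{i,0}+\sum_{i,j}x_{i,j}^kd_{i,j})$. $\mathcal H$: $\sum_ky_j^k\le z_jC_j$, $z_j\in\{0,1\}$,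 $\sum_ks^kt_j^k\le z_jS_j$, each $p_j$, $p^s_j$ chosen from its menu. Platform profit $\mathcal P=\sum_{j,k}(\phi_j^k+s^kp_j^s)t_j^k+\sum_jp_j\sum_ky_j^k-\sum_j(f_jz_j+c_j\sum_ky_j^k/C_j)$. BMIP: maximize $\mathcal P$ over tuples in $\mathcal H$ whose follower-$k$ components minimize $\mathcal C^k$ over $\mathcal S^k(\mathbf p,\mathbf p^s,\mathbf z)$ for every $k$. BMIP1: maximize $\mathcal P(\mathbf p,\mathbf p^s,\mathbf z,\mathbf y',\mathbf t')$ s.t. the tuple with primed follower variables lies in $\mathcal H$, $(\mathbf x'^k,\mathbf q'^k,\mathbf y'^k,\mathbf t'^k)\in\mathcal S^k(\mathbf p,\mathbf p^s,\mathbf z)$, and $\mathcal C^k$ at the primed vector is $\le\min_{\mathcal S^k(\mathbf p,\mathbf p^s,\mathbf z)}\mathcal C^k$ for each $k$. *)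

From HB Require Import structures.
From mathcomp Require Import all_boot all_order all_algebra.
Set Implicit Arguments. Unset Strict Implicit. Unset Printing Implicit Defensive.
Import Order.TTheory GRing.Theory Num.Theory.
Local Open Scope ring_scope.

(* Areas I, edge nodes J, services K are finite types; R is the real field
   (stated for any realFieldType). Booleans b are embedded in R as b%:R. *)

Record params (I J K : finType) (R : realFieldType) := Params {
  Cap   : J -> R;
  Stor  : J -> R;
  dd    : I -> J -> R;
  dd0   : I -> R;
  Dm    : K -> R;
  Bud   : K -> R;
  sk    : K -> R;
  wk    : K -> R;
  psi   : I -> K -> R;
  Rq    : I -> K -> R;
  phi   : J -> K -> R;
  cc    : J -> R;
  ff    : J -> R;
  p0    : R;
  aa    : I -> J -> K -> bool;
  pmenu : J -> seq R;
  psmenu : J -> seq R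
}.

Section Model.
Variables (I J K : finType) (R : realFieldType) (P : params I J K R).

Definition params_ok : Prop :=
  (forall j, 0 < Cap P j) /\ (forall j, 0 <= Stor P j) /\
  (forall i j, 0 <= dd P i j) /\ (forall i, 0 <= dd0 P i) /\
  (forall k, 0 <= Dm P k) /\ (forall k, 0 <= Bud P k) /\
  (forall k, 0 <= sk P k) /\ (forall k, 0 <= wk P k) /\
  (forall i k, 0 <= psi P i k) /\ (forall i k, 0 <= Rq P i k) /\
  (forall j k, 0 <= phi P j k) /\ (forall j, 0 <= cc P j) /\
  (forall j, 0 <= ff P j) /\ 0 <= p0 P /\
  (forall j, all (fun v => 0 <= v) (pmenu P j) /\
             all (fun v => 0 <= v) (psmenu P j)).

Record fvar := FVar {
  fx0 : I -> R;
  fx  : I -> J -> R;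
  fq  : I -> R;
  fy0 : R;
  fy  : J -> R;
  ft  : J -> bool
}.

Record sol := Sol {
  pp  : J -> R;
  pps : J -> R;
  zz  : J -> bool;
  fol : K -> fvar
}.

Definition fixc (k : K) (ps : J -> R) (j : J) : R := phi P j k + sk P k * ps j.

Definition Sk (k : K) (p ps : J -> R) (z : J -> bool) (v : fvar) : Prop :=
  ((forall i, 0 <= fx0 v i) /\ (forall i j, 0 <= fx v i j) /\
   (forall i, 0 <= fq v i) /\ 0 <= fy0 v /\ (forall j, 0 <= fy v j)) /\
  p0 P * fy0 v + \sum_j p j * fy v j + \sum_j fixc k ps j * (ft v j)%:R
    <= Bud P k /\
  (forall j, ft v j ==> z j) /\
  (forall j, fy v j <= Cap P j * (ft v j)%:R) /\
  \sum_i fx0 v i <= fy0 v /\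
  (forall j, \sum_i fx v i j <= fy v j) /\
  (forall i, fx0 v i + \sum_j fx v i j + fq v i = Rq P i k) /\
  (forall i, fx0 v i * dd0 P i + \sum_j fx v i j * dd P i j
               <= Dm P k * Rq P i k) /\
  (forall i j, fx v i j <= (aa P i j k)%:R * Rq P i k).

Definition Ck (k : K) (p ps : J -> R) (v : fvar) : R :=
  p0 P * fy0 v + \sum_j p j * fy v j + \sum_i psi P i k * fq v i
  + \sum_j fixc k ps j * (ft v j)%:R
  + wk P k * (\sum_i fx0 v i * dd0 P i + \sum_i \sum_j fx v i j * dd P i j).

Definition Hset (s : sol) : Prop :=
  [/\ (forall j, \sum_k fy (fol s k) j <= (zz s j)%:R * Cap P j),
      (forall j, \sum_k sk P k * (ft (fol s k) j)%:R <= (zz s j)%:R * Stor P j),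
      (forall j, pp s j \in pmenu P j) &
      (forall j, pps s j \in psmenu P j)].

Definition profit (s : sol) : R :=
  \sum_j \sum_k fixc k (pps s) j * (ft (fol s k) j)%:R
  + \sum_j pp s j * \sum_k fy (fol s k) j
  - \sum_j (ff P j * (zz s j)%:R + cc P j * (\sum_k fy (fol s k) j) / Cap P j).

Definition bmip_feas (s : sol) : Prop :=
  Hset s /\ forall k,
    Sk k (pp s) (pps s) (zz s) (fol s k) /\
    (forall v, Sk k (pp s) (pps s) (zz s) v ->
       Ck k (pp s) (pps s) (fol s k) <= Ck k (pp s) (pps s) v).

Definition bmip_opt (s : sol) : Prop :=
  bmip_feas s /\ forall s', bmip_feas s' -> profit s' <= profit s.

(* BMIP1: primed vector feasible and C^k(primed) <= min over S^k
   (i.e. <= C^k(v) for every v in S^k) *)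
Definition bmip1_feas (s : sol) : Prop :=
  [/\ Hset s,
      (forall k, Sk k (pp s) (pps s) (zz s) (fol s k)) &
      (forall k v, Sk k (pp s) (pps s) (zz s) v ->
         Ck k (pp s) (pps s) (fol s k) <= Ck k (pp s) (pps s) v)].

Definition bmip1_opt (s : sol) : Prop :=
  bmip1_feas s /\ forall s', bmip1_feas s' -> profit s' <= profit s.

Record dvar := DVar {
  mu1 : R; mu2 : R;
  nu  : J -> R; Gam : J -> R; sig : J -> R;
  xi  : I -> R; tau : I -> J -> R;
  eta : I -> R
}.

Definition dual_ok (k : K) (s : sol) (tl : {ffun J -> bool}) (d : dvar) : Prop :=
  let p := pp s in let ps := pps s in let z := zz s in
  ((0 <= mu1 d) /\ (0 <= mu2 d) /\ (forall j, 0 <= nu d j) /\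
   (forall j, 0 <= Gam d j) /\ (forall j, 0 <= sig d j) /\
   (forall i, 0 <= xi d i) /\ (forall i j, 0 <= tau d i j)) /\
  0 <= p0 P * (1 + mu1 d) - mu2 d /\
  (forall j, 0 <= p j * mu1 d - Gam d j + sig d j + p j) /\
  (forall i, - (wk P k * dd0 P i) <= mu2 d + dd0 P i * xi d i - eta d i) /\
  (forall i, eta d i <= psi P i k) /\
  (forall i j, - (wk P k * dd P i j)
                 <= Gam d j + dd P i j * xi d i + tau d i j - eta d i) /\
  Ck k p ps (fol s k) <=
        \sum_j fixc k ps j * (tl j)%:R
        - mu1 d * (Bud P k - \sum_j fixc k ps j * (tl j)%:R)
        + \sum_j nu d j * ((tl j)%:R - (z j)%:R)
        + \sum_i Rq P i k * eta d i
        - \sum_i Rq P i k * Dm P k * xi d i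
        - \sum_j Cap P j * (tl j)%:R * sig d j
        - \sum_i \sum_j (aa P i j k)%:R * tau d i j * Rq P i k.

(* BMIPe: l ranges over all Q = 2^J binary vectors, indexed by {ffun J -> bool} *)
Definition bmipe_feas (s : sol) (du : K -> {ffun J -> bool} -> dvar) : Prop :=
  [/\ Hset s,
      (forall k, Sk k (pp s) (pps s) (zz s) (fol s k)) &
      (forall k tl, dual_ok k s tl (du k tl))].

Definition bmipe_opt (s : sol) (du : K -> {ffun J -> bool} -> dvar) : Prop :=
  bmipe_feas s du /\
  forall s' du', bmipe_feas s' du' -> profit s' <= profit s.

End Model.

(* Once the leader's decisions and the binary vector t^k are fixed, the problem
   of follower k is a linear program in (x, q, y).  Its costs are nonnegative,
   so its dual is feasible, and LP duality (derived below from Farkas' lemma,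
   which is proved by Fourier-Motzkin elimination) states that the optimum of
   this LP is the supremum of the dual objective; when the LP is infeasible,
   for instance when t_j = 1 > z_j, the dual is unbounded.  Hence C^k at the
   primed vector is at most min over S^k of C^k, i.e. at most the optimum of
   each of the 2^J linear programs, exactly when every t^{k,l} admits dual
   multipliers satisfying the constraints of BMIPe.  BMIP1 and BMIPe thus have
   the same feasible leader/follower tuples, hence the same optima, and BMIP
   has the same feasible set as BMIP1. *)

From HB Require Import structures.
From mathcomp Require Import all_boot all_order all_algebra.
From mathcomp Require Import ring lra.
From Stdlib Require Import Classical_Prop IndefiniteDescription.
Set Implicit Arguments. Unset Strict Implicit. Unset Printing Implicit Defensive.
Import Order.TTheory GRing.Theory Num.Theory.
Local Open Scope ring_scope.

Section KroneckerSums.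
Variable R : pzRingType.

Lemma sum_if_eq (T : finType) (u0 : T) (F G : T -> R) :
  \sum_u (if u == u0 then F u else 0) * G u = F u0 * G u0.
Proof.
by rewrite (bigD1 u0) //= eqxx big1 ?addr0 // => u /negbTE ->; rewrite mul0r.
Qed.

Lemma sum_mul_if_eq (T : finType) (u0 : T) (F G : T -> R) :
  \sum_u G u * (if u0 == u then F u else 0) = G u0 * F u0.
Proof.
rewrite (bigD1 u0) //= eqxx big1 ?addr0 // => u u_ne.
by rewrite eq_sym in u_ne; rewrite (negbTE u_ne) mulr0.
Qed.

Lemma sum_if_eq_outer (T U : finType) (u0 : T) (F G : T -> U -> R) :
  \sum_u \sum_w (if u == u0 then F u w else 0) * G u w = \sum_w F u0 w * G u0 w.
Proof.
rewrite (bigD1 u0) //= [X in _ + X]big1 ?addr0 => [|u u_ne].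
  by apply: eq_bigr => w _; rewrite eqxx.
by apply: big1 => w _; rewrite (negbTE u_ne) mul0r.
Qed.

Lemma sum_if_eq_inner (T U : finType) (w0 : U) (F G : T -> U -> R) :
  \sum_u \sum_w (if w == w0 then F u w else 0) * G u w = \sum_u F u w0 * G u w0.
Proof. by apply: eq_bigr => u _; rewrite sum_if_eq. Qed.

Lemma sum_mul_if_eq_outer (T U : finType) (u0 : T) (F G : T -> U -> R) :
  \sum_u \sum_w G u w * (if u0 == u then F u w else 0) = \sum_w G u0 w * F u0 w.
Proof.
rewrite (bigD1 u0) //= [X in _ + X]big1 ?addr0 => [|u u_ne].
  by apply: eq_bigr => w _; rewrite eqxx.
by apply: big1 => w _; rewrite eq_sym in u_ne; rewrite (negbTE u_ne) mulr0.
Qed.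

Lemma sum_mul0 (T : finType) (G : T -> R) : \sum_u 0 * G u = 0.
Proof. by rewrite big1 // => u _; rewrite mul0r. Qed.

Lemma sum_mulr0 (T : finType) (G : T -> R) : \sum_u G u * 0 = 0.
Proof. by rewrite big1 // => u _; rewrite mulr0. Qed.

Lemma sum2_mul0 (T U : finType) (G : T -> U -> R) : \sum_u \sum_w 0 * G u w = 0.
Proof. by rewrite big1 // => u _; rewrite sum_mul0. Qed.

Lemma sum2_mulr0 (T U : finType) (G : T -> U -> R) : \sum_u \sum_w G u w * 0 = 0.
Proof. by rewrite big1 // => u _; rewrite sum_mulr0. Qed.

Lemma sum_mulN (T : finType) (F G : T -> R) :
  \sum_u (- F u) * G u = - \sum_u F u * G u.
Proof. by rewrite -sumrN; apply: eq_bigr => u _; rewrite mulNr. Qed.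

Lemma sum_mul1 (T : finType) (G : T -> R) : \sum_u 1 * G u = \sum_u G u.
Proof. by apply: eq_bigr => u _; rewrite mul1r. Qed.

End KroneckerSums.

Section AffineFarkas.
Variable R : realFieldType.

Definition aform (V : finType) := ((V -> R) * R)%type.

Definition aeval (V : finType) (g : aform V) (x : V -> R) : R :=
  \sum_v g.1 v * x v + g.2.

Lemma aeval_upd (V : finType) (g : aform V) x v0 a :
  aeval g (fun v => if v == v0 then a else x v) = aeval g x + g.1 v0 * (a - x v0).
Proof.
rewrite /aeval (bigD1 v0) //= [in RHS](bigD1 v0) //= eqxx.
rewrite (eq_bigr (fun v => g.1 v * x v)) => [|v /negbTE -> //]; ring.
Qed.

Lemma aeval_scale (V : finType) (g : aform V) a x :
  aeval g (fun v => a * x v) = a * \sum_v g.1 v * x v + g.2.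
Proof.
rewrite /aeval big_distrr; congr (_ + _).
by apply: eq_bigr => v _ /=; rewrite mulrCA.
Qed.

Lemma aeval_shift (V : finType) (g : aform V) x0 a x :
  aeval g (fun v => x0 v + a * x v) = aeval g x0 + a * \sum_v g.1 v * x v.
Proof.
rewrite /aeval big_distrr -addrA (addrC g.2) addrA -big_split /=.
by congr (_ + _); apply: eq_bigr => v _; ring.
Qed.

Lemma sum_aeval (V T : finType) (g : T -> aform V) (l : T -> R) x :
  \sum_t l t * aeval (g t) x =
  \sum_v (\sum_t l t * (g t).1 v) * x v + \sum_t l t * (g t).2.
Proof.
under eq_bigr => t _ do rewrite /aeval mulrDr big_distrr.
rewrite big_split /= exchange_big; congr (_ + _); apply: eq_bigr => v _.
by rewrite big_distrl; apply: eq_bigr => t _ /=; rewrite mulrA.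
Qed.

Lemma weak_duality (V T : finType) (g : T -> aform V) (c : V -> R) (l : T -> R) x :
  (forall t, 0 <= l t) -> (forall v, c v = \sum_t l t * (g t).1 v) ->
  (forall t, 0 <= aeval (g t) x) -> - \sum_t l t * (g t).2 <= \sum_v c v * x v.
Proof.
move=> l_ge0 c_comb x_feas.
have : 0 <= \sum_t l t * aeval (g t) x by apply: sumr_ge0 => t _; apply: mulr_ge0.
by rewrite sum_aeval (eq_bigr (fun v => c v * x v)) => [|v _]; [lra|rewrite c_comb].
Qed.

Lemma fourier_motzkin_shift (T : finType) (r c : T -> R) :
  (forall t, c t = 0 -> 0 <= r t) ->
  (forall p q, 0 < c p -> c q < 0 -> 0 <= - c q * r p + c p * r q) ->
  exists tau, forall t, 0 <= r t + c t * tau.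
Proof.
move=> r_ge0 r_pair; pose L t := - r t / c t.
have shift_pos t tau : 0 < c t -> L t <= tau -> 0 <= r t + c t * tau.
  by move=> ct; rewrite /L ler_pdivrMr // => h; nra.
have shift_neg t tau : c t < 0 -> tau <= L t -> 0 <= r t + c t * tau.
  by move=> ct; rewrite /L ler_ndivlMr // => h; nra.
have shift_zero t tau : c t = 0 -> 0 <= r t + c t * tau.
  by move=> ct; rewrite ct mul0r addr0; apply: r_ge0.
case: (pickP (fun t => 0 < c t)) => [p0 cp0|no_pos].
  (* the largest lower bound L p still lies below every upper bound L q *)
  have [p cp L_max] := @arg_maxP _ _ _ p0 (fun t => 0 < c t) L cp0.
  exists (L p) => t; case: (ltrgtP (c t) 0) => ct; last exact: shift_zero.
    apply: shift_neg; rewrite // /L ler_pdivrMr // mulrAC ler_ndivlMr //.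
    by have := r_pair p t cp ct; nra.
  by apply: shift_pos => //; apply: L_max.
exists (- \sum_t `|L t|) => t; case: (ltrgtP (c t) 0) => ct; last exact: shift_zero.
- apply: shift_neg => //; rewrite lerNl (bigD1 t) //=.
  have := ler_norm (- L t); rewrite normrN.
  have : 0 <= \sum_(u | u != t) `|L u| by apply: sumr_ge0 => u _.
  lra.
- by move: (no_pos t); rewrite ct.
Qed.

(* The Fourier-Motzkin combinations eliminating a coordinate whose coefficient
   in row t is c t: the rows with c t = 0, and for every pair of rows with
   coefficients of opposite signs the positive combination cancelling it. *)
Section Elimination.
Variables (T : finType) (c : T -> R).

Definition fm_opposite (p q : T) := (0 < c p) && (c q < 0).
Definition fm_wl (p q : T) : R := if fm_opposite p q then - c q else 0.
Definition fm_wr (p q : T) : R := if fm_opposite p q then c p else 0.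

Definition fm_comb (u : T -> R) (e : T + T * T) : R :=
  match e with
  | inl z => (c z == 0)%:R * u z
  | inr (p, q) => fm_wl p q * u p + fm_wr p q * u q
  end.

Lemma fm_comb_pivot e : fm_comb c e = 0.
Proof.
case: e => [z|[p q]] /=; first by case: eqP => [->|_]; rewrite ?mulr0 ?mul0r.
by rewrite /fm_wl /fm_wr; case: ifP => _; ring.
Qed.

Definition fm_lift (lam : T + T * T -> R) (t : T) : R :=
  lam (inl t) * (c t == 0)%:R + \sum_q lam (inr (t, q)) * fm_wl t q
  + \sum_p lam (inr (p, t)) * fm_wr p t.

Lemma fm_lift_ge0 lam : (forall e, 0 <= lam e) -> forall t, 0 <= fm_lift lam t.
Proof.
have wl_ge0 p q : 0 <= fm_wl p q.
  by rewrite /fm_wl /fm_opposite; case: ifP => // /andP[_ /ltW]; rewrite oppr_ge0.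
have wr_ge0 p q : 0 <= fm_wr p q.
  by rewrite /fm_wr /fm_opposite; case: ifP => // /andP[/ltW].
move=> lam_ge0 t; rewrite /fm_lift !addr_ge0 ?mulr_ge0 ?ler0n //.
  by apply: sumr_ge0 => q _; apply: mulr_ge0.
by apply: sumr_ge0 => p _; apply: mulr_ge0.
Qed.

Lemma sum_fm_lift lam (u : T -> R) :
  \sum_t fm_lift lam t * u t = \sum_e lam e * fm_comb u e.
Proof.
rewrite big_sumType /=.
have -> : \sum_(pq : T * T) lam (inr pq) * fm_comb u (inr pq)
          = \sum_p \sum_q lam (inr (p, q)) * fm_comb u (inr (p, q)).
  by rewrite pair_bigA; apply: eq_bigr => -[].
under eq_bigr => t _ do rewrite /fm_lift !mulrDl !big_distrl.
rewrite !big_split /= -addrA; congr (_ + _).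
  by apply: eq_bigr => t _; rewrite mulrA.
rewrite [X in _ + X]exchange_big -big_split; apply: eq_bigr => p _ /=.
by rewrite -big_split; apply: eq_bigr => q _ /=; ring.
Qed.

Definition fm_eliminate (V : finType) (g : T -> aform V) (e : T + T * T) : aform V :=
  (fun v => fm_comb (fun t => (g t).1 v) e, fm_comb (fun t => (g t).2) e).

Lemma aeval_fm_eliminate (V : finType) (g : T -> aform V) x e :
  aeval (fm_eliminate g e) x = fm_comb (fun t => aeval (g t) x) e.
Proof.
rewrite /aeval /=; case: e => [z|[p q]] /=.
  rewrite mulrDr big_distrr; congr (_ + _).
  by apply: eq_bigr => v _; rewrite /= mulrA.
rewrite !mulrDr !big_distrr /= addrACA -big_split /=; congr (_ + _).
by apply: eq_bigr => v _; ring.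
Qed.

End Elimination.

Lemma fm_eliminate_infeasible (V T : finType) (g : T -> aform V) v0 :
  (forall x, exists t, aeval (g t) x < 0) ->
  forall x, exists e, aeval (fm_eliminate (fun t => (g t).1 v0) g e) x < 0.
Proof.
move=> infeas x; pose c t := (g t).1 v0.
case: (boolP [exists e, aeval (fm_eliminate c g e) x < 0]) => [/existsP //|].
move=> /existsPn comb_ge0.
pose r t := aeval (g t) x - c t * x v0.
have [tau tau_ok] : exists tau, forall t, 0 <= r t + c t * tau.
  apply: fourier_motzkin_shift => [z cz|p q cp cq].
    have := comb_ge0 (inl z); rewrite -leNgt aeval_fm_eliminate /= cz eqxx.
    by rewrite /r cz /=; lra.
  have := comb_ge0 (inr (p, q)); rewrite -leNgt aeval_fm_eliminate /=.
  by rewrite /fm_wl /fm_wr /fm_opposite cp cq /r /=; nra.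
have [t] := infeas (fun v => if v == v0 then tau else x v).
by rewrite aeval_upd; have := tau_ok t; rewrite /r /c; lra.
Qed.

Lemma farkas_alternative_on (V : finType) n (S : {set V}) (T : finType)
    (g : T -> aform V) :
  #|S| = n -> (forall t v, v \notin S -> (g t).1 v = 0) ->
  (forall x, exists t, aeval (g t) x < 0) ->
  exists2 lam : T -> R, (forall t, 0 <= lam t) &
    (forall v, \sum_t lam t * (g t).1 v = 0) /\ \sum_t lam t * (g t).2 < 0.
Proof.
elim: n S T g => [|n IH] S T g cardS supp infeas.
  have [t0] := infeas (fun _ => 0).
  rewrite /aeval big1 => [|v _]; last by rewrite mulr0.
  rewrite add0r => gt0_neg.
  exists (fun t => if t == t0 then 1 else 0) => [t|]; first by case: ifP.
  split; last by rewrite sum_if_eq mul1r.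
  by move=> v; rewrite sum_if_eq supp ?mulr0 // (cards0_eq cardS) in_set0.
have /set0Pn [v0 Sv0] : S != set0 by rewrite -card_gt0 cardS.
pose c t := (g t).1 v0.
have [|||lam lam_ge0 [lam_coef lam_const]] := IH (S :\ v0) _ (fm_eliminate c g).
- by move: cardS; rewrite (cardsD1 v0) Sv0 add1n => -[].
- move=> e v; rewrite in_setD1 negb_and negbK => /orP[/eqP->|vS].
    exact: fm_comb_pivot.
  by case: e => [z|[p q]] /=; rewrite !supp ?mulr0 ?addr0.
- exact: fm_eliminate_infeasible.
exists (fm_lift c lam); first exact: fm_lift_ge0.
by split=> [v|]; rewrite sum_fm_lift; [apply: lam_coef|].
Qed.

Lemma farkas_alternative (V T : finType) (g : T -> aform V) :
  (forall x, exists t, aeval (g t) x < 0) ->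
  exists2 lam : T -> R, (forall t, 0 <= lam t) &
    (forall v, \sum_t lam t * (g t).1 v = 0) /\ \sum_t lam t * (g t).2 < 0.
Proof. by apply: (@farkas_alternative_on _ _ [set: V]) => // t v; rewrite in_setT. Qed.

Section Homogenization.
Variables (V T : finType) (g : T -> aform V) (c : V -> R) (gam : R).

(* The rows a_t x + b_t tau >= 0, tau >= 0 and -(c x + gam tau) - 1 >= 0 in the
   unknowns (x, tau), the extra coordinate being tau. *)
Definition homogenize (e : T + 'I_1 + 'I_1) : aform (V + 'I_1)%type :=
  match e with
  | inl (inl t) => (fun w => if w is inl v then (g t).1 v else (g t).2, 0)
  | inl (inr _) => (fun w => if w is inl _ then 0 else 1, 0)
  | inr _ => (fun w => if w is inl v then - c v else - gam, -1)
  end.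

Lemma homogenize_infeasible :
  (exists x0, forall t, 0 <= aeval (g t) x0) ->
  (forall x, (forall t, 0 <= aeval (g t) x) -> 0 <= aeval (c, gam) x) ->
  forall y, exists e, aeval (homogenize e) y < 0.
Proof.
move=> [x0 x0_feas] implied y.
case: (boolP [exists e, aeval (homogenize e) y < 0]) => [/existsP //|].
move=> /existsPn y_feas.
have {}y_feas e : 0 <= aeval (homogenize e) y by rewrite leNgt y_feas.
pose x v := y (inl v); pose tau := y (inr ord0).
have row_t t :
    aeval (homogenize (inl (inl t))) y = \sum_v (g t).1 v * x v + (g t).2 * tau.
  by rewrite /aeval big_sumType big_ord1 /= addr0.
have tau_ge0 : 0 <= tau.
  have := y_feas (inl (inr ord0)).
  rewrite /aeval big_sumType big_ord1 big1 => [|v _] /=; last by rewrite mul0r.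
  by rewrite add0r mul1r addr0.
have row_c : \sum_v c v * x v + gam * tau <= -1.
  have := y_feas (inr ord0); rewrite /aeval big_sumType big_ord1 /=.
  rewrite (eq_bigr (fun v => - (c v * x v))) => [|v _]; last by rewrite mulNr.
  by rewrite sumrN -/tau; lra.
case: (ltrgtP tau 0) => [|tau_gt0|tau0]; first by rewrite ltNge tau_ge0.
  (* (x / tau) satisfies the system but violates the implied inequality *)
  have x_feas t : 0 <= aeval (g t) (fun v => tau^-1 * x v).
    rewrite aeval_scale.
    rewrite (_ : _ + _ = tau^-1 * (\sum_v (g t).1 v * x v + (g t).2 * tau)).
      by rewrite -row_t; apply: mulr_ge0 => //; rewrite invr_ge0 ltW.
    by field; rewrite lt0r_neq0.
  have := implied _ x_feas; rewrite aeval_scale /= => h.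
  have := mulr_ge0 (ltW tau_gt0) h; rewrite mulrDr mulVKf ?lt0r_neq0 //; lra.
(* x is a recession direction of the system along which c decreases *)
pose a := aeval (c, gam) x0 + 1.
have a_gt0 : 0 < a by have := implied _ x0_feas; rewrite /a; lra.
have shifted_feas t : 0 <= aeval (g t) (fun v => x0 v + a * x v).
  rewrite aeval_shift; apply: addr_ge0 => //; apply: mulr_ge0; first exact: ltW.
  by have := y_feas (inl (inl t)); rewrite row_t tau0 mulr0 addr0.
have := implied _ shifted_feas; rewrite aeval_shift /= => shifted.
move: row_c; rewrite tau0 mulr0 addr0 => row_c.
by exfalso; rewrite /a in shifted a_gt0; nra.
Qed.

Lemma affine_farkas_feasible :
  (exists x0, forall t, 0 <= aeval (g t) x0) ->
  (forall x, (forall t, 0 <= aeval (g t) x) -> 0 <= aeval (c, gam) x) ->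
  exists2 l : T -> R, (forall t, 0 <= l t) &
    (forall v, c v = \sum_t l t * (g t).1 v) /\ \sum_t l t * (g t).2 <= gam.
Proof.
move=> feas implied.
have [lam lam_ge0 [lam_coef lam_const]] :=
  farkas_alternative (homogenize_infeasible feas implied).
pose mu := lam (inr ord0); pose rho := lam (inl (inr ord0)).
move: lam_const; rewrite !big_sumType !big_ord1 /= big1 => [|t _]; last first.
  by rewrite mulr0.
rewrite mulr0 !add0r mulrN1 oppr_lt0 -/mu => mu_gt0.
have sum_div (F : T -> R) :
    \sum_t lam (inl (inl t)) / mu * F t = mu^-1 * \sum_t lam (inl (inl t)) * F t.
  by rewrite big_distrr; apply: eq_bigr => t _ /=; rewrite mulrAC mulrC.
exists (fun t => lam (inl (inl t)) / mu) => [t|].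
  by apply: divr_ge0 => //; exact: ltW.
split=> [v|].
  have := lam_coef (inl v); rewrite !big_sumType !big_ord1 /= mulr0 addr0 -/mu => e.
  rewrite sum_div; apply: (mulfI (lt0r_neq0 mu_gt0)).
  by rewrite mulrA divrr ?mul1r ?unitfE ?lt0r_neq0 //; lra.
have := lam_coef (inr ord0); rewrite !big_sumType !big_ord1 /= mulr1 -/mu -/rho => e.
rewrite sum_div ler_pdivrMl // mulrC.
by have := lam_ge0 (inl (inr ord0)); rewrite -/rho; lra.
Qed.

End Homogenization.

Lemma affine_farkas_infeasible (V T : finType) (g : T -> aform V) (c : V -> R)
    (gam : R) (l1 : T -> R) :
  (forall t, 0 <= l1 t) -> (forall v, c v = \sum_t l1 t * (g t).1 v) ->
  (forall x, exists t, aeval (g t) x < 0) ->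
  exists2 l : T -> R, (forall t, 0 <= l t) &
    (forall v, c v = \sum_t l t * (g t).1 v) /\ \sum_t l t * (g t).2 <= gam.
Proof.
move=> l1_ge0 l1_coef infeas.
have [lam lam_ge0 [lam_coef lam_const]] := farkas_alternative infeas.
(* adding a large multiple of the infeasibility certificate drives the constant down *)
pose d := \sum_t l1 t * (g t).2 - gam.
pose s := `|d| / - \sum_t lam t * (g t).2.
have s_ge0 : 0 <= s by rewrite divr_ge0 // oppr_ge0 ltW.
have sum_comb (F : T -> R) :
    \sum_t (l1 t + s * lam t) * F t = \sum_t l1 t * F t + s * \sum_t lam t * F t.
  by rewrite big_distrr -big_split; apply: eq_bigr => t _ /=; ring.
exists (fun t => l1 t + s * lam t) => [t|].
  exact: addr_ge0 (l1_ge0 t) (mulr_ge0 s_ge0 (lam_ge0 t)).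
split=> [v|]; first by rewrite sum_comb lam_coef mulr0 addr0 l1_coef.
rewrite sum_comb (_ : s * _ = - `|d|); last by rewrite /s; field; rewrite ltr0_neq0.
by have := ler_norm d; rewrite /d; lra.
Qed.

(* The cone hypothesis on c is needed only when the system is infeasible. *)
Lemma affine_farkas (V T : finType) (g : T -> aform V) (c : V -> R) (gam : R) :
  (exists2 l1 : T -> R,
     (forall t, 0 <= l1 t) & forall v, c v = \sum_t l1 t * (g t).1 v) ->
  (forall x, (forall t, 0 <= aeval (g t) x) -> 0 <= aeval (c, gam) x) ->
  exists2 l : T -> R, (forall t, 0 <= l t) &
    (forall v, c v = \sum_t l t * (g t).1 v) /\ \sum_t l t * (g t).2 <= gam.
Proof.
move=> [l1 l1_ge0 l1_coef] implied.
have [feas|infeas] := classic (exists x0, forall t, 0 <= aeval (g t) x0).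
  exact: affine_farkas_feasible.
apply: affine_farkas_infeasible l1_ge0 l1_coef _ => x.
apply: NNPP => no_neg; apply: infeas; exists x => t.
by rewrite leNgt; apply/negP => neg; apply: no_neg; exists t.
Qed.

End AffineFarkas.

(* The variables x_{i,0}, x_{i,j}, q_i, y_0, y_j of the follower LP, and its
   constraints, each read as "slack >= 0": the sign constraints, the budget,
   t_j <= z_j (which involves no variable once t is fixed), capacity, the two
   flow constraints, the demand equation as two inequalities, delay, access. *)
Section FollowerLPIndices.
Variables I J : finType.

Inductive lpvar := VX0 of I | VX of I & J | VQ of I | VY0 | VY of J.

Definition lpvar_enc (v : lpvar) : I + I * J + I + 'I_1 + J :=
  match v with
  | VX0 i => inl (inl (inl (inl i)))
  | VX i j => inl (inl (inl (inr (i, j))))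
  | VQ i => inl (inl (inr i))
  | VY0 => inl (inr ord0)
  | VY j => inr j
  end.

Definition lpvar_dec (e : I + I * J + I + 'I_1 + J) : lpvar :=
  match e with
  | inl (inl (inl (inl i))) => VX0 i
  | inl (inl (inl (inr (i, j)))) => VX i j
  | inl (inl (inr i)) => VQ i
  | inl (inr _) => VY0
  | inr j => VY j
  end.

Lemma lpvar_encK : cancel lpvar_enc lpvar_dec. Proof. by case. Qed.

Lemma lpvar_decK : cancel lpvar_dec lpvar_enc.
Proof. by case=> [[[[i|[i j]]|i]|u]|j] //; rewrite (ord1 u). Qed.

HB.instance Definition _ := Finite.copy lpvar (can_type lpvar_encK).

Inductive lpcon :=
  | CSign of lpvar | CBudget | CLink of J | CCap of J | CFlow0 | CFlow of J
  | CServeLe of I | CServeGe of I | CDelay of I | CAccess of I & J.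

Definition lpcon_enc (c : lpcon) :
    lpvar + 'I_1 + J + J + 'I_1 + J + I + I + I + I * J :=
  match c with
  | CSign v => inl (inl (inl (inl (inl (inl (inl (inl (inl v))))))))
  | CBudget => inl (inl (inl (inl (inl (inl (inl (inl (inr ord0))))))))
  | CLink j => inl (inl (inl (inl (inl (inl (inl (inr j)))))))
  | CCap j => inl (inl (inl (inl (inl (inl (inr j))))))
  | CFlow0 => inl (inl (inl (inl (inl (inr ord0)))))
  | CFlow j => inl (inl (inl (inl (inr j))))
  | CServeLe i => inl (inl (inl (inr i)))
  | CServeGe i => inl (inl (inr i))
  | CDelay i => inl (inr i)
  | CAccess i j => inr (i, j)
  end.

Definition lpcon_dec (e : lpvar + 'I_1 + J + J + 'I_1 + J + I + I + I + I * J) :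
    lpcon :=
  match e with
  | inl (inl (inl (inl (inl (inl (inl (inl (inl v)))))))) => CSign v
  | inl (inl (inl (inl (inl (inl (inl (inl (inr _)))))))) => CBudget
  | inl (inl (inl (inl (inl (inl (inl (inr j))))))) => CLink j
  | inl (inl (inl (inl (inl (inl (inr j)))))) => CCap j
  | inl (inl (inl (inl (inl (inr _))))) => CFlow0
  | inl (inl (inl (inl (inr j)))) => CFlow j
  | inl (inl (inl (inr i))) => CServeLe i
  | inl (inl (inr i)) => CServeGe i
  | inl (inr i) => CDelay i
  | inr (i, j) => CAccess i j
  end.

Lemma lpcon_encK : cancel lpcon_enc lpcon_dec. Proof. by case. Qed.

Lemma lpcon_decK : cancel lpcon_dec lpcon_enc.
Proof.
by case=> [[[[[[[[[v|u]|j]|j]|u]|j]|i]|i]|i]|[i j]] //; rewrite (ord1 u).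
Qed.

HB.instance Definition _ := Finite.copy lpcon (can_type lpcon_encK).

Variable R : nmodType.

Lemma sum_lpvar (F : lpvar -> R) :
  \sum_v F v = \sum_i F (VX0 i) + \sum_i \sum_j F (VX i j) + \sum_i F (VQ i)
               + F VY0 + \sum_j F (VY j).
Proof.
rewrite (reindex lpvar_dec) /=; last first.
  by exists lpvar_enc => e _; rewrite ?lpvar_decK ?lpvar_encK.
rewrite !big_sumType big_ord1 /= pair_bigA.
by congr (_ + _ + _ + _ + _); apply: eq_bigr => -[].
Qed.

Lemma sum_lpcon (F : lpcon -> R) :
  \sum_c F c = \sum_v F (CSign v) + F CBudget + \sum_j F (CLink j)
               + \sum_j F (CCap j) + F CFlow0 + \sum_j F (CFlow j)
               + \sum_i F (CServeLe i) + \sum_i F (CServeGe i) + \sum_i F (CDelay i)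
               + \sum_i \sum_j F (CAccess i j).
Proof.
rewrite (reindex lpcon_dec) /=; last first.
  by exists lpcon_enc => e _; rewrite ?lpcon_decK ?lpcon_encK.
rewrite !big_sumType !big_ord1 /= pair_bigA.
by congr (_ + _); apply: eq_bigr => -[].
Qed.

End FollowerLPIndices.

Arguments VX0 {I J}. Arguments VX {I J}. Arguments VQ {I J}.
Arguments VY0 {I J}. Arguments VY {I J}.
Arguments CSign {I J}. Arguments CBudget {I J}. Arguments CLink {I J}.
Arguments CCap {I J}. Arguments CFlow0 {I J}. Arguments CFlow {I J}.
Arguments CServeLe {I J}. Arguments CServeGe {I J}. Arguments CDelay {I J}.
Arguments CAccess {I J}.

Section FollowerLP.
Variables (I J K : finType) (R : realFieldType) (P : params I J K R).
Variables (k : K) (s : sol I J K R) (t : {ffun J -> bool}).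

Local Notation p := (pp s).
Local Notation ps := (pps s).
Local Notation z := (zz s).

Definition fixed_cost : R := \sum_j fixc P k ps j * (t j)%:R.

Definition lpcost (v : lpvar I J) : R :=
  match v with
  | VX0 i => wk P k * dd0 P i
  | VX i j => wk P k * dd P i j
  | VQ i => psi P i k
  | VY0 => p0 P
  | VY j => p j
  end.

Definition lpcoef (c : lpcon I J) (v : lpvar I J) : R :=
  match c, v with
  | CSign w, _ => if v == w then 1 else 0
  | CBudget, VY0 => - p0 P
  | CBudget, VY j => - p j
  | CCap j, VY j' => if j' == j then -1 else 0
  | CFlow0, VY0 => 1
  | CFlow0, VX0 _ => -1
  | CFlow j, VY j' => if j' == j then 1 else 0
  | CFlow j, VX _ j' => if j' == j then -1 else 0
  | CServeLe i, (VX0 i' | VQ i') => if i' == i then -1 else 0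
  | CServeLe i, VX i' _ => if i' == i then -1 else 0
  | CServeGe i, (VX0 i' | VQ i') => if i' == i then 1 else 0
  | CServeGe i, VX i' _ => if i' == i then 1 else 0
  | CDelay i, VX0 i' => if i' == i then - dd0 P i' else 0
  | CDelay i, VX i' j => if i' == i then - dd P i' j else 0
  | CAccess i j, VX i' j' => if i' == i then (if j' == j then -1 else 0) else 0
  | _, _ => 0
  end.

Definition lpconst (c : lpcon I J) : R :=
  match c with
  | CBudget => Bud P k - fixed_cost
  | CLink j => (z j)%:R - (t j)%:R
  | CCap j => Cap P j * (t j)%:R
  | CServeLe i => Rq P i k
  | CServeGe i => - Rq P i k
  | CDelay i => Dm P k * Rq P i k
  | CAccess i j => (aa P i j k)%:R * Rq P i k
  | _ => 0
  end.

Definition lpform (c : lpcon I J) : aform R (lpvar I J) := (lpcoef c, lpconst c).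

Definition lpslack (c : lpcon I J) (x : lpvar I J -> R) : R :=
  match c with
  | CSign v => x v
  | CBudget => Bud P k - (p0 P * x VY0 + \sum_j p j * x (VY j) + fixed_cost)
  | CLink j => (z j)%:R - (t j)%:R
  | CCap j => Cap P j * (t j)%:R - x (VY j)
  | CFlow0 => x VY0 - \sum_i x (VX0 i)
  | CFlow j => x (VY j) - \sum_i x (VX i j)
  | CServeLe i => Rq P i k - (x (VX0 i) + \sum_j x (VX i j) + x (VQ i))
  | CServeGe i => x (VX0 i) + \sum_j x (VX i j) + x (VQ i) - Rq P i k
  | CDelay i =>
      Dm P k * Rq P i k - (x (VX0 i) * dd0 P i + \sum_j x (VX i j) * dd P i j)
  | CAccess i j => (aa P i j k)%:R * Rq P i k - x (VX i j)
  end.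

Lemma aeval_lpform c x : aeval (lpform c) x = lpslack c x.
Proof.
case: c => [v||j|j||j|i|i|i|i j]; first by rewrite /aeval sum_if_eq mul1r addr0.
all: rewrite /aeval sum_lpvar /= ?sum_if_eq ?sum_if_eq_outer ?sum_if_eq_inner.
all: rewrite ?sum_if_eq ?sum_mul0 ?sum2_mul0 ?sum_mulN ?sum_mul1; try ring.
rewrite (eq_bigr (fun j => x (VX i j) * dd P i j)) => [|j _]; last exact: mulrC.
ring.
Qed.

Definition fvar_of (x : lpvar I J -> R) : fvar I J R :=
  FVar (fun i => x (VX0 i)) (fun i j => x (VX i j)) (fun i => x (VQ i)) (x VY0)
       (fun j => x (VY j)) t.

Definition point_of (v : fvar I J R) (w : lpvar I J) : R :=
  match w with
  | VX0 i => fx0 v i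
  | VX i j => fx v i j
  | VQ i => fq v i
  | VY0 => fy0 v
  | VY j => fy v j
  end.

Lemma Sk_fvar_of x : (forall c, 0 <= lpslack c x) -> Sk P k p ps z (fvar_of x).
Proof.
move=> slack; have sign w : 0 <= x w := slack (CSign w).
split; first by do !split=> *; apply: sign.
split; first by have := slack CBudget; rewrite /= subr_ge0.
split.
  move=> j; have := slack (CLink j); rewrite /= subr_ge0.
  by case: (t j) (z j) => [] []; rewrite //= ler10.
split; first by move=> j; have := slack (CCap j); rewrite /= subr_ge0.
split; first by have := slack CFlow0; rewrite /= subr_ge0.
split; first by move=> j; have := slack (CFlow j); rewrite /= subr_ge0.
split.
  move=> i; apply/eqP; rewrite eq_le.
  have := slack (CServeLe i); have := slack (CServeGe i).
  by rewrite /= !subr_ge0 => -> ->.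
split; first by move=> i; have := slack (CDelay i); rewrite /= subr_ge0.
by move=> i j; have := slack (CAccess i j); rewrite /= subr_ge0.
Qed.

Lemma fixed_cost_ft (v : fvar I J R) : (forall j, ft v j = t j) ->
  \sum_j fixc P k ps j * (ft v j)%:R = fixed_cost.
Proof. by move=> ft_t; apply: eq_bigr => j _; rewrite ft_t. Qed.

Lemma lpslack_point_of v :
  Sk P k p ps z v -> (forall j, ft v j = t j) ->
  forall c, 0 <= lpslack c (point_of v).
Proof.
move=> [[x0_ge0 [x_ge0 [q_ge0 [y0_ge0 y_ge0]]]]].
move=> [budget [link [cap [flow0 [flow [serve [delay access]]]]]]] ft_t.
case=> [[i|i j|i||j]||j|j||j|i|i|i|i j] /=; rewrite ?subr_ge0 //.
- by rewrite -(fixed_cost_ft ft_t).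
- by move: (link j); rewrite ft_t; case: (t j) (z j) => [] []; rewrite //= ler01.
- by rewrite -ft_t.
- by rewrite serve.
- by rewrite serve.
Qed.

Lemma Ck_fvar_of x : Ck P k p ps (fvar_of x) = \sum_w lpcost w * x w + fixed_cost.
Proof.
rewrite sum_lpvar /Ck /= mulrDr !big_distrr /=.
have -> : \sum_i wk P k * (x (VX0 i) * dd0 P i) = \sum_i wk P k * dd0 P i * x (VX0 i).
  by apply: eq_bigr => i _; ring.
have -> : \sum_i wk P k * \sum_j x (VX i j) * dd P i j
          = \sum_i \sum_j wk P k * dd P i j * x (VX i j).
  by apply: eq_bigr => i _; rewrite big_distrr; apply: eq_bigr => j _ /=; ring.
by rewrite /fixed_cost; ring.
Qed.

Lemma Ck_point_of v : (forall j, ft v j = t j) ->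
  Ck P k p ps v = \sum_w lpcost w * point_of v w + fixed_cost.
Proof. by move=> ft_t; rewrite -Ck_fvar_of /Ck /= fixed_cost_ft. Qed.

Definition lpcoefT (l : lpcon I J -> R) (v : lpvar I J) : R :=
  match v with
  | VX0 i => l CFlow0 + l (CServeLe i) - l (CServeGe i) + l (CDelay i) * dd0 P i
  | VX i j => l (CFlow j) + l (CServeLe i) - l (CServeGe i) + l (CDelay i) * dd P i j
              + l (CAccess i j)
  | VQ i => l (CServeLe i) - l (CServeGe i)
  | VY0 => l CBudget * p0 P - l CFlow0
  | VY j => l CBudget * p j + l (CCap j) - l (CFlow j)
  end.

Lemma sum_lpcoef l v : \sum_c l c * lpcoef c v = l (CSign v) - lpcoefT l v.
Proof.
rewrite sum_lpcon sum_mul_if_eq mulr1.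
case: v => [i|i j|i||j] /=.
all: rewrite ?sum_mul_if_eq ?sum_mul_if_eq_outer ?sum_mul_if_eq ?sum_mulr0 ?sum2_mulr0.
all: ring.
Qed.

Lemma sum_lpconst l : \sum_c l c * lpconst c =
  l CBudget * (Bud P k - fixed_cost) + \sum_j l (CLink j) * ((z j)%:R - (t j)%:R)
  + \sum_j l (CCap j) * (Cap P j * (t j)%:R)
  + \sum_i (l (CServeLe i) - l (CServeGe i)) * Rq P i k
  + \sum_i l (CDelay i) * (Dm P k * Rq P i k)
  + \sum_i \sum_j l (CAccess i j) * ((aa P i j k)%:R * Rq P i k).
Proof.
rewrite sum_lpcon /= sum_mulr0 !mulr0 !addr0 sum_mulr0 addr0.
have -> : \sum_i l (CServeGe i) * - Rq P i k = - \sum_i l (CServeGe i) * Rq P i k.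
  by rewrite -sumrN; apply: eq_bigr => i _; rewrite mulrN.
have -> : \sum_i (l (CServeLe i) - l (CServeGe i)) * Rq P i k
          = \sum_i l (CServeLe i) * Rq P i k - \sum_i l (CServeGe i) * Rq P i k.
  by rewrite -sumrB; apply: eq_bigr => i _; rewrite mulrBl.
ring.
Qed.

Definition dual_value (d : dvar I J R) : R :=
  \sum_j fixc P k ps j * (t j)%:R
  - mu1 d * (Bud P k - \sum_j fixc P k ps j * (t j)%:R)
  + \sum_j nu d j * ((t j)%:R - (z j)%:R)
  + \sum_i Rq P i k * eta d i
  - \sum_i Rq P i k * Dm P k * xi d i
  - \sum_j Cap P j * (t j)%:R * sig d j
  - \sum_i \sum_j (aa P i j k)%:R * tau d i j * Rq P i k.

Lemma dual_value_weights (l : lpcon I J -> R) (d : dvar I J R) :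
  l CBudget = mu1 d -> (forall j, l (CLink j) = nu d j) ->
  (forall j, l (CCap j) = sig d j) ->
  (forall i, l (CServeGe i) - l (CServeLe i) = eta d i) ->
  (forall i, l (CDelay i) = xi d i) -> (forall i j, l (CAccess i j) = tau d i j) ->
  dual_value d = fixed_cost - \sum_c l c * lpconst c.
Proof.
move=> budget link cap serve delay access; rewrite sum_lpconst /dual_value -/fixed_cost.
have -> : \sum_j nu d j * ((t j)%:R - (z j)%:R)
          = - \sum_j l (CLink j) * ((z j)%:R - (t j)%:R).
  by rewrite -sumrN; apply: eq_bigr => j _; rewrite link; ring.
have -> : \sum_i Rq P i k * eta d i
          = - \sum_i (l (CServeLe i) - l (CServeGe i)) * Rq P i k.
  by rewrite -sumrN; apply: eq_bigr => i _; rewrite -serve; ring.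
have -> : \sum_i Rq P i k * Dm P k * xi d i
          = \sum_i l (CDelay i) * (Dm P k * Rq P i k).
  by apply: eq_bigr => i _; rewrite delay; ring.
have -> : \sum_j Cap P j * (t j)%:R * sig d j
          = \sum_j l (CCap j) * (Cap P j * (t j)%:R).
  by apply: eq_bigr => j _; rewrite cap; ring.
have -> : \sum_i \sum_j (aa P i j k)%:R * tau d i j * Rq P i k
          = \sum_i \sum_j l (CAccess i j) * ((aa P i j k)%:R * Rq P i k).
  by apply: eq_bigr => i _; apply: eq_bigr => j _; rewrite access; ring.
by rewrite budget; ring.
Qed.

Lemma lpcost_ge0 : params_ok P -> (forall j, 0 <= p j) -> forall v, 0 <= lpcost v.
Proof.
move=> [_ [_ [dd_ge0 [dd0_ge0 [_ [_ [_ [wk_ge0 [psi_ge0 [_ [_ [_ [_ [p0_ge0 _]]]]]]]]]]]]]].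
move=> p_ge0.
by case=> * /=; rewrite ?mulr_ge0.
Qed.

Definition dual_of (l : lpcon I J -> R) : dvar I J R :=
  DVar (l CBudget) (l CFlow0) (fun j => l (CLink j)) (fun j => l (CFlow j))
       (fun j => l (CCap j)) (fun i => l (CDelay i)) (fun i j => l (CAccess i j))
       (fun i => l (CServeGe i) - l (CServeLe i)).

Lemma dual_certificate_exists :
  params_ok P -> (forall j, 0 <= p j) ->
  (forall v, Sk P k p ps z v -> (forall j, ft v j = t j) ->
     Ck P k p ps (fol s k) <= Ck P k p ps v) ->
  exists d, dual_ok P k s t d.
Proof.
move=> ok p_ge0 fol_min.
have [|x x_feas|l l_ge0 [l_coef l_const]] :=
  @affine_farkas _ _ _ lpform lpcost (fixed_cost - Ck P k p ps (fol s k)).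
- exists (fun c => if c is CSign v then lpcost v else 0) => [[v|||||||||]|v] //=.
    exact: lpcost_ge0.
  by rewrite sum_lpcoef /=; case: v => * /=; ring.
- have x_slack c : 0 <= lpslack c x by rewrite -aeval_lpform.
  have := fol_min _ (Sk_fvar_of x_slack) (fun j => erefl).
  by rewrite Ck_fvar_of /aeval /=; lra.
have sign v : 0 <= lpcost v + lpcoefT l v.
  by rewrite l_coef sum_lpcoef subrK l_ge0.
exists (dual_of l); split; first by do !split=> *; apply: l_ge0.
split; first by have := sign VY0; rewrite /=; lra.
split; first by move=> j; have := sign (VY j); rewrite /=; lra.
split; first by move=> i; have := sign (VX0 i); rewrite /=; lra.
split; first by move=> i; have := sign (VQ i); rewrite /=; lra.
split; first by move=> i j; have := sign (VX i j); rewrite /=; lra.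
change (Ck P k p ps (fol s k) <= dual_value (dual_of l)).
by rewrite (@dual_value_weights l) //; move: l_const; rewrite /=; lra.
Qed.

(* The free dual variable eta is split as the difference of two nonnegative
   multipliers, and the multipliers of the sign constraints are the dual slacks. *)
Definition dual_multipliers (d : dvar I J R) (c : lpcon I J) : R :=
  match c with
  | CSign _ => 0
  | CBudget => mu1 d
  | CLink j => nu d j
  | CCap j => sig d j
  | CFlow0 => mu2 d
  | CFlow j => Gam d j
  | CServeLe i => Num.max (eta d i) 0 - eta d i
  | CServeGe i => Num.max (eta d i) 0
  | CDelay i => xi d i
  | CAccess i j => tau d i j
  end.

Definition dual_weights (d : dvar I J R) (c : lpcon I J) : R :=
  if c is CSign v then lpcost v + lpcoefT (dual_multipliers d) v
  else dual_multipliers d c.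

Lemma dual_certificate_bound (d : dvar I J R) (v : fvar I J R) :
  dual_ok P k s t d -> Sk P k p ps z v -> (forall j, ft v j = t j) ->
  Ck P k p ps (fol s k) <= Ck P k p ps v.
Proof.
move=> [[mu1_ge0 [mu2_ge0 [nu_ge0 [Gam_ge0 [sig_ge0 [xi_ge0 tau_ge0]]]]]]].
move=> [dY0 [dY [dX0 [dQ [dX bound]]]]] v_feas ft_t.
have l_ge0 c : 0 <= dual_weights d c.
  case: c => [[i|i j|i||j]||j|j||j|i|i|i|i j] /=.
  all: rewrite ?subr_ge0 ?le_max ?lexx ?orbT //.
  - by have := dX0 i; lra.
  - by have := dX i j; lra.
  - by have := dQ i; lra.
  - by have := dY0; lra.
  - by have := dY j; lra.
have l_coef w : lpcost w = \sum_c dual_weights d c * lpcoef c w.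
  by rewrite sum_lpcoef /=; case: w => * /=; ring.
have v_slack c : 0 <= aeval (lpform c) (point_of v).
  by rewrite aeval_lpform; apply: lpslack_point_of.
have := weak_duality (g := lpform) l_ge0 l_coef v_slack.
move: bound; rewrite -/(dual_value d) (@dual_value_weights (dual_weights d)) //=.
  by rewrite (Ck_point_of ft_t); lra.
by move=> i; ring.
Qed.

End FollowerLP.

Lemma argmax_projection (R : realFieldType) (S D : Type) (f : S -> R)
    (F : S -> Prop) (G : S -> D -> Prop) :
  (forall s, F s <-> exists d, G s d) ->
  forall s, (F s /\ forall s', F s' -> f s' <= f s) <->
            exists d, G s d /\ forall s' d', G s' d' -> f s' <= f s.
Proof.
move=> FG s; split=> [[/FG [d Gsd] s_max]|[d [Gsd s_max]]].
  by exists d; split=> // s' d' Gs'd'; apply/s_max/FG; exists d'.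
split=> [|s' /FG [d' Gs'd']]; last exact: s_max Gs'd'.
by apply/FG; exists d.
Qed.

Lemma bmip_feas_bmip1_feas (I J K : finType) (R : realFieldType)
    (P : params I J K R) s :
  bmip_feas P s <-> bmip1_feas P s.
Proof.
split=> [[H_s fol_opt]|[H_s fol_feas fol_min]]; last first.
  by split=> // k; split; [apply: fol_feas|apply: fol_min].
by split=> // k; have [] := fol_opt k.
Qed.

Lemma bmip1_feas_bmipe_feas (I J K : finType) (R : realFieldType)
    (P : params I J K R) s :
  params_ok P -> bmip1_feas P s <-> exists du, bmipe_feas P s du.
Proof.
move=> ok; split=> [[H_s fol_feas fol_min]|[du [H_s fol_feas du_ok]]]; last first.
  split=> // k v v_feas.
  apply: (dual_certificate_bound (du_ok k [ffun j => ft v j])) => // j.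
  by rewrite ffunE.
have p_ge0 j : 0 <= pp s j.
  case: H_s => _ _ /(_ j) p_menu _.
  case: ok => _ [_ [_ [_ [_ [_ [_ [_ [_ [_ [_ [_ [_ [_ /(_ j) [/allP p_menu_ge0 _]]]]]]]]]]]]]].
  exact: p_menu_ge0.
have [du du_ok] : exists du : K * {ffun J -> bool} -> dvar I J R,
    forall kt, dual_ok P kt.1 s kt.2 (du kt).
  apply: (functional_choice (fun kt d => dual_ok P kt.1 s kt.2 d)) => -[k tl] /=.
  by apply: (dual_certificate_exists ok p_ge0) => v v_feas _; apply: fol_min.
by exists (fun k tl => du (k, tl)); split=> // k tl; apply: (du_ok (k, tl)).
Qed.

Theorem proposition3 (I J K : finType) (R : realFieldType)
  (P : params I J K R) :
  params_ok P ->
  (exists s, bmip_opt P s) ->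
  (exists s du, bmip1_opt P s /\ bmipe_opt P s du) /\
  (forall s, bmip1_opt P s <-> exists du, bmipe_opt P s du).
Proof.
move=> ok [s0 s0_opt].
have bmip1_bmipe := argmax_projection (profit P) (bmip1_feas_bmipe_feas (P := P) ^~ ok).
split=> //.
have s0_opt1 : bmip1_opt P s0.
  case: s0_opt => /bmip_feas_bmip1_feas s0_feas s0_max.
  by split=> // s' /bmip_feas_bmip1_feas; apply: s0_max.
have [du du_opt] := (bmip1_bmipe s0).1 s0_opt1.
by exists s0, du.
Qed.
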